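(* If $X$ is an infinite Tychonoff space, then $\mathcal{F}(X)$ is not pseudocompact.
   Context: $\mathcal{F}(X)$ is the set of nonempty finite subsets of $X$ with the Vietoris topology (generated by $U^+=\{A: A\subset U\}$ and $U^-=\{A: A\cap U\neq\emptyset\}$ for $U$ open in $X$). A Tychonoff space is pseudocompact if every locally finite collection of nonempty open sets is finite. *)

From HB Require Import structures.
From mathcomp Require Import all_boot all_order all_algebra.
From mathcomp Require Import all_classical all_reals all_analysis.
Set Implicit Arguments. Unset Strict Implicit. Unset Printing Implicit Defensive.
Import Order.TTheory GRing.Theory Num.Theory.
Import numFieldNormedType.Exports.
Local Open Scope classical_set_scope.
Local Open Scope ring_scope.

Definition tychonoff_space (R : realType) (X : topologicalType) : Prop :=
  accessible_space X /\
  forall (x : X) (B : set X), closed B -> ~ B x ->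
    exists f : X -> R, [/\ continuous f, f x = 0 & forall y, B y -> f y = 1].

Definition finsubsets (X : Type) : Type :=
  {A : set X | finite_set A /\ A !=set0}.

HB.instance Definition _ (X : Type) := gen_eqMixin (finsubsets X).
HB.instance Definition _ (X : Type) := gen_choiceMixin (finsubsets X).

(** Subbase of the Vietoris topology: for U open in X,
    (true, U)  indexes U^+ = {A | A ⊆ U},
    (false, U) indexes U^- = {A | A ∩ U ≠ ∅}. *)
Definition vietoris_index (X : topologicalType) : set (bool * set X)%type :=
  [set i | open i.2].

Definition vietoris_subbase (X : topologicalType) (i : bool * set X)
  : set (finsubsets X) :=
  if i.1 then [set A | proj1_sig A `<=` i.2]
  else [set A | proj1_sig A `&` i.2 !=set0].

Definition vietorisF (X : topologicalType) : Type := finsubsets X.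
HB.instance Definition _ (X : topologicalType) := Choice.on (vietorisF X).
HB.instance Definition _ (X : topologicalType) :=
  isSubBaseTopological.Build (vietorisF X)
    (@vietoris_index X) (@vietoris_subbase X).

Definition locally_finite_collection (T : topologicalType) (C : set (set T)) :=
  forall x : T, exists2 N, nbhs x N & finite_set [set U | C U /\ U `&` N !=set0].

Definition pseudocompact (T : topologicalType) : Prop :=
  forall C : set (set T),
    (forall U, C U -> open U /\ U !=set0) ->
    locally_finite_collection C -> finite_set C.

(* In an infinite Tychonoff space, splitting an infinite open set by a
   continuous real function into two open pieces with disjoint closures, one of
   them still infinite, and iterating, yields nonempty open sets U_0, U_1, ...
   with pairwise disjoint closures.  In F(X) the sets W_n of finite sets meeting
   each of U_0, ..., U_n are nonempty, open and pairwise distinct, and they form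
   a locally finite family: a finite set B misses some closure cl U_i, and
   (X \ cl U_i)^+ is then a neighbourhood of B disjoint from every W_n, n >= i. *)

From HB Require Import structures.
From mathcomp Require Import all_boot all_order all_algebra.
From mathcomp Require Import all_classical all_reals all_analysis.
From mathcomp Require Import lra.
Local Open Scope classical_set_scope.

Set Implicit Arguments. Unset Strict Implicit.
Import Order.TTheory GRing.Theory Num.Theory.
Import numFieldNormedType.Exports.

Lemma open_forall_leq (T : topologicalType) (P : nat -> set T) (n : nat) :
  (forall i, open (P i)) -> open [set x | forall i, (i <= n)%N -> P i x].
Proof.
move=> oP; elim: n => [|n IH].
  rewrite (_ : [set x | _] = P 0%N) //; apply/seteqP; split=> x /= Px.
    exact: Px.
  by move=> i; rewrite leqn0 => /eqP ->.
rewrite (_ : [set x | _] = [set x | forall i, (i <= n)%N -> P i x] `&` P n.+1).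
  exact: openI.
apply/seteqP; split=> x /=.
  by move=> Px; split=> [i lein|]; apply: Px; [exact: leqW|].
by move=> [Px Pn1] i; rewrite leq_eqVlt ltnS => /orP[/eqP ->|/Px].
Qed.

Lemma trivIset_finite_meets (T I : Type) (F : I -> set T) (B : set T) :
  trivIset setT F -> finite_set B -> finite_set [set i | F i `&` B !=set0].
Proof.
move=> trivF finB.
apply: (@sub_finite_set _ _ (\bigcup_(b in B) [set i | F i b])).
  by move=> i [b [Fib Bb]]; exists b.
apply: bigcup_finite => // b _.
have [[i Fib]|noF] := pselect (exists i, F i b); last first.
  by apply: (@sub_finite_set _ _ set0) => // i Fib; apply: noF; exists i.
apply: (@sub_finite_set _ _ [set i]) => // j Fjb.
by apply: trivF => //; exists b.
Qed.

Lemma finite_image_II_nonempty (T : Type) (f : nat -> T) (n : nat) :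
  finite_set (f @` `I_n.+1) /\ f @` `I_n.+1 !=set0.
Proof. by split; [exact: finite_image (finite_II _)|exists (f 0%N), 0%N]. Qed.

Section VietorisNotPseudocompact.
Variable X : topologicalType.

Lemma vietoris_subbase_open (b : bool) (U : set X) :
  open U -> @open (vietorisF X) (vietoris_subbase (b, U)).
Proof.
move=> oU; exists [set vietoris_subbase (b, U)]; last by rewrite bigcup_set1.
by move=> _ ->; apply: finI_from1.
Qed.

Definition meets_upto (U : nat -> set X) (n : nat) : set (vietorisF X) :=
  [set A | forall i, (i <= n)%N -> proj1_sig A `&` U i !=set0].

Variables (U : nat -> set X) (x : nat -> X).
Hypothesis oU : forall n, open (U n).
Hypothesis xU : forall n, U n (x n).
Hypothesis trivU : trivIset setT (fun n => closure (U n)).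

Lemma meets_upto_open (n : nat) : open (meets_upto U n).
Proof.
apply: (@open_forall_leq (vietorisF X) (fun i => vietoris_subbase (false, U i))).
by move=> i; apply/vietoris_subbase_open/oU.
Qed.

Definition points_upto (n : nat) : vietorisF X :=
  exist _ (x @` `I_n.+1) (finite_image_II_nonempty x n).

Lemma meets_upto_points (n : nat) : meets_upto U n (points_upto n).
Proof. by move=> i lein; exists (x i); split; [exists i; rewrite /= ?ltnS|]. Qed.

Lemma meets_upto_points_lt (n m : nat) :
  (n < m)%N -> ~ meets_upto U m (points_upto n).
Proof.
move=> ltnm /(_ m (leqnn m)) [_ [[i /= lein <-] Uxi]].
have eqim : i = m.
  by apply: trivU => //; exists (x i); split; apply: subset_closure.
by move: (leq_trans lein ltnm); rewrite eqim ltnn.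
Qed.

Lemma meets_upto_inj : injective (meets_upto U).
Proof.
move=> n m eqnm; apply/eqP; case: ltngtP => // [ltnm|ltmn]; exfalso.
  by apply: (meets_upto_points_lt ltnm); rewrite -eqnm; apply: meets_upto_points.
by apply: (meets_upto_points_lt ltmn); rewrite eqnm; apply: meets_upto_points.
Qed.

Lemma meets_upto_locally_finite :
  locally_finite_collection (range (meets_upto U)).
Proof.
move=> B.
have [i0 Bi0] : exists i0, ~ (closure (U i0) `&` proj1_sig B !=set0).
  have finB : finite_set (proj1_sig B) by case: (proj2_sig B).
  have := trivIset_finite_meets trivU finB; rewrite -[X in finite_set X]setCK.
  by move=> /(cofinite_set_infinite infinite_nat) /infinite_setN0 [i Ci]; exists i.
exists (vietoris_subbase (true, ~` closure (U i0))).
  apply: open_nbhs_nbhs; split.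
    by apply/vietoris_subbase_open/closed_openC/closed_closure.
  by move=> b Bb clb; apply: Bi0; exists b.
apply: (@sub_finite_set _ _ (meets_upto U @` `I_i0)).
  move=> _ [[n _ <-] [A [meetsA /= AclU]]]; exists n => //=.
  rewrite ltnNge; apply/negP => lei0n.
  have [y [Ay Uy]] := meetsA i0 lei0n.
  exact: AclU y Ay (subset_closure Uy).
exact: finite_image (finite_II _).
Qed.

Theorem vietoris_not_pseudocompact : ~ pseudocompact (vietorisF X).
Proof.
move=> pcX; apply: infinite_nat.
have finW : finite_set (range (meets_upto U)).
  apply: pcX meets_upto_locally_finite => _ [n _ <-].
  by split; [apply: meets_upto_open|exists (points_upto n); apply: meets_upto_points].
apply: sub_finite_set (finite_preimage (in2W meets_upto_inj) finW).
by move=> n _; exists n.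
Qed.

End VietorisNotPseudocompact.

Lemma closure_sub_closed (T : topologicalType) (A C : set T) :
  closed C -> A `<=` C -> closure A `<=` C.
Proof. by move=> cC AC; rewrite [X in _ `<=` X](closure_id C).1 //; apply: closureS. Qed.

Section TychonoffSeparatedSequence.
Variables (R : realType) (X : topologicalType).

Lemma closure_level_sets_disjoint (f : X -> R) (s t : R) (A B : set X) :
  continuous f -> (s < t)%R ->
  closure (A `&` [set x | (f x < s)%R]) `&` closure (B `&` [set x | (t < f x)%R])
  = set0.
Proof.
move=> cf ltst; apply/disjoints_subset.
have closed_preim D : closed D -> closed (f @^-1` D).
  exact: (continuous_closedP f).1 cf D.
have clB : closure (B `&` [set x | (t < f x)%R]) `<=` [set x | (t <= f x)%R].
  apply: closure_sub_closed; first exact: (closed_preim _ (@closed_ge _ t)).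
  by move=> x [_ /ltW].
apply: (@subset_trans _ [set x | (f x <= s)%R]).
  apply: closure_sub_closed; first exact: (closed_preim _ (@closed_le _ s)).
  by move=> x [_ /ltW].
move=> x /= fxs /clB /=; lra.
Qed.

Hypothesis tychX : tychonoff_space R X.

Definition separated_split (Y U Y' : set X) :=
  [/\ open U /\ U !=set0, open Y' /\ infinite_set Y', U `<=` Y, Y' `<=` Y
     & closure U `&` closure Y' = set0].

Lemma open_infinite_split (Y : set X) : open Y -> infinite_set Y ->
  exists U Y', separated_split Y U Y'.
Proof.
move=> oY infY.
have [a Ya] := infinite_setN0 infY.
have [b [Yb nba]] := infinite_setN0 (infinite_setD infY (finite_set1 a)).
have [f [cf fa fb]] := tychX.2 a [set b] (@accessible_closed_set1 _ tychX.1 b)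
  (fun ab => nba (esym ab)).
have {}fb := fb b erefl.
have open_level (g : X -> R) r : continuous g ->
    open (Y `&` [set x | (g x < r)%R]) /\ open (Y `&` [set x | (r < g x)%R]).
  move=> cg; split; apply: openI => //.
    exact: (continuousP g).1 cg _ (@open_lt _ r).
  exact: (continuousP g).1 cg _ (@open_gt _ r).
(* One of Y `&` {f > 1/3}, Y `&` {f <= 1/3} is infinite; U is cut out around
   b or a at the opposite end. *)
have [finY13|infY13] := pselect (finite_set (Y `&` [set x | (1/3 < f x)%R])).
- exists (Y `&` [set x | (2/3 < f x)%R]), (Y `&` [set x | (f x < 1/2)%R]).
  split; [split|split|by move=> ? []|by move=> ? []|].
  + exact: (open_level f _ cf).2.
  + by exists b; split=> //; rewrite /= fb; lra.
  + exact: (open_level f _ cf).1.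
  + apply: contra_not (infinite_setD infY finY13); apply: sub_finite_set.
    move=> x [Yx notY13]; split=> //=; rewrite ltNge; apply/negP => fx.
    by apply: notY13; split=> //=; lra.
  + by rewrite setIC; apply: closure_level_sets_disjoint => //; lra.
- exists (Y `&` [set x | (f x < 1/4)%R]), (Y `&` [set x | (1/3 < f x)%R]).
  split; [split|split|by move=> ? []|by move=> ? []|].
  + exact: (open_level f _ cf).1.
  + by exists a; split=> //; rewrite /= fa; lra.
  + exact: (open_level f _ cf).2.
  + exact: infY13.
  + by apply: closure_level_sets_disjoint => //; lra.
Qed.

Lemma tychonoff_separated_open_seq : infinite_set [set: X] ->
  exists U : nat -> set X, [/\ forall n, open (U n), forall n, U n !=set0
    & trivIset setT (fun n => closure (U n))].
Proof.
move=> infX.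
have /choice[next nextP] : forall Y : set X, exists p : set X * set X,
    open Y -> infinite_set Y -> separated_split Y p.1 p.2.
  move=> Y; have [[oY infY]|notY] := pselect (open Y /\ infinite_set Y).
    by have [U [Y' splitY]] := open_infinite_split oY infY; exists (U, Y').
  by exists (set0, set0) => oY infY; exfalso; apply: notY.
pose Y n := iter n (fun Z => (next Z).2) setT.
have YP n : open (Y n) /\ infinite_set (Y n).
  by elim: n => [|n [oYn infYn]]; [split; [exact: openT|]|case: (nextP _ oYn infYn)].
have {}nextP n := nextP _ (YP n).1 (YP n).2.
have Y_decr m n : (m <= n)%N -> Y n `<=` Y m.
  apply: (@homo_leq _ Y (fun A B => B `<=` A)) => [A|A B C AB CA|k].
  - exact: subset_refl.
  - exact: subset_trans CA AB.
  - by case: (nextP k).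
exists (fun n => (next (Y n)).1); split.
- by move=> n; case: (nextP n) => -[].
- by move=> n; case: (nextP n) => -[].
apply: ltn_trivIset => n m ltmn; apply/disjoints_subset.
have [_ _ _ _ /disjoints_subset disj_m] := nextP m.
apply: (subset_trans disj_m); apply/subsetC/closureS.
apply: (subset_trans _ (Y_decr _ _ ltmn)).
by case: (nextP n).
Qed.

End TychonoffSeparatedSequence.

Theorem lemma4p6 (R : realType) (X : topologicalType) :
  tychonoff_space R X -> infinite_set [set: X] -> ~ pseudocompact (vietorisF X).
Proof.
move=> tychX infX.
have [U [oU U0 trivU]] := tychonoff_separated_open_seq tychX infX.
have [x xU] := choice U0.
exact: vietoris_not_pseudocompact oU xU trivU.
Qed.
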